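(* Let $G:=F_0*X_0*X_1$ be a free product of groups and let $h$ be an automorphism of $G$ which fixes $F_0$ pointwise, leaves $X_0*X_1$ invariant, and acts on $X_0*X_1$ as an automorphism of prime order $p$ whose fixed point set is exactly $X_0$. Suppose that $h$ fixes the conjugacy class of an element $a\in G\setminus\big((F_0*X_0)\cup(X_0*X_1)\big)$ which is cyclically reduced of the form $a=a_1x_1a_2x_2\cdots a_mx_m$ with $a_i\in F_0\setminus\{1\}$ and $x_i\in (X_0*X_1)\setminus\{1\}$ for $i=1,\dots,m$. Then there is a permutation $\sigma$ in the subgroup $\langle(1\,2\,\cdots\,m)\rangle$ of $Sym(\{1,\dots,m\})$ such that (i) $a_i=a_{\sigma(i)}$ and $h(x_i)=x_{\sigma(i)}$ for all $i$, and (ii) $p$ divides the order of $\sigma$.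
   Context: ''$h$ fixes the conjugacy class of $a$'' means $h(a)$ is conjugate to $a$ in $G$. Cyclically reduced refers to the free product decomposition $G=F_0*(X_0*X_1)$. *)

(* Abstract (possibly infinite) groups are given by an
   explicit record with the group axioms; free products are internal free
   products, defined through the normal form theorem (uniqueness of reduced
   alternating words). *)
From Stdlib Require List.
From mathcomp Require Import all_boot all_fingroup.
Set Implicit Arguments. Unset Strict Implicit. Unset Printing Implicit Defensive.

Record Grp := {
  gcar :> Type;
  gmul : gcar -> gcar -> gcar;
  gone : gcar;
  ginv : gcar -> gcar;
  gmulA : forall x y z, gmul x (gmul y z) = gmul (gmul x y) z;
  gmul1g : forall x, gmul gone x = x;
  gmulVg : forall x, gmul (ginv x) x = gone
}.

Section GrpDefs.
Variable G : Grp.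

Definition gprod (s : seq G) : G := foldr (@gmul G) (gone G) s.

Definition is_subgroup (A : G -> Prop) : Prop :=
  A (gone G) /\ (forall x y, A x -> A y -> A (gmul x y)) /\
  (forall x, A x -> A (ginv x)).

Definition gen2 (A B : G -> Prop) : G -> Prop :=
  fun g => exists s : seq G, (forall x, List.In x s -> A x \/ B x) /\ g = gprod s.

Definition reduced_word (A B : G -> Prop) (w : seq (bool * G)) : Prop :=
  (forall u, List.In u w -> u.2 <> gone G /\ (if u.1 then A u.2 else B u.2)) /\
  sorted (fun u v : bool * G => u.1 != v.1) w.

Definition free_product (A B : G -> Prop) : Prop :=
  is_subgroup A /\ is_subgroup B /\
  forall w1 w2, reduced_word A B w1 -> reduced_word A B w2 ->
    gprod (map snd w1) = gprod (map snd w2) -> w1 = w2.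

Definition is_automorphism (h : G -> G) : Prop :=
  (forall x y, h (gmul x y) = gmul (h x) (h y)) /\ bijective h.

Definition are_conjugate (x y : G) : Prop :=
  exists g : G, y = gmul (ginv g) (gmul x g).

Definition order_on (Y : G -> Prop) (h : G -> G) (n : nat) : Prop :=
  0 < n /\ (forall y, Y y -> iter n h y = y) /\
  (forall k, 0 < k < n -> exists y, Y y /\ iter k h y <> y).

End GrpDefs.

(* the m-cycle (1 2 ... m), on indices 'I_m = {0, ..., m-1} *)
Definition mcycle (m : nat) : 'S_m := perm (@ordS_inj m).

(* In the free product F0 * (X0 * X1), a = a_1 x_1 ... a_m x_m and
   h(a) = a_1 h(x_1) ... a_m h(x_m) are cyclically reduced words, and conjugate
   cyclically reduced words are cyclic rotations of each other: conjugating by one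
   letter either rotates the word or yields a reduced word starting and ending in
   the same factor, which conjugation by a reduced word can never make cyclically
   reduced again.  Since both words alternate starting in F0, the rotation is by an
   even number 2q of letters, i.e. by sigma = (1 2 ... m)^q, whence (i).  Then
   h^k(x_i) = x_(sigma^k(i)), so both h^p and h^#[sigma] fix every x_i; if p did
   not divide #[sigma], h itself would fix every x_i, putting all x_i in X0 and
   a in F0 * X0. *)
From mathcomp Require Import all_boot all_fingroup zify.
From Stdlib Require Import Classical.
Set Implicit Arguments. Unset Strict Implicit. Unset Printing Implicit Defensive.

Section GroupLaws.
Variable G : Grp.
Implicit Types x y z : G.

Lemma gmulgV x : gmul x (ginv x) = gone G.
Proof.
have e : gmul (ginv (ginv x)) (ginv x) = gone G by rewrite gmulVg.
by rewrite -[LHS]gmul1g -{1}e -gmulA (gmulA (ginv x)) gmulVg gmul1g.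
Qed.

Lemma gmulg1 x : gmul x (gone G) = x.
Proof. by rewrite -(gmulVg x) gmulA gmulgV gmul1g. Qed.

Lemma gmulKg x y : gmul (ginv x) (gmul x y) = y.
Proof. by rewrite gmulA gmulVg gmul1g. Qed.

Lemma gmulI x y z : gmul x y = gmul x z -> y = z.
Proof. by move=> e; rewrite -(gmulKg x y) e gmulKg. Qed.

Lemma gmul_eq1_inv x y : gmul x y = gone G -> y = ginv x.
Proof. by move=> e; apply: (@gmulI x); rewrite e gmulgV. Qed.

Lemma ginvK x : ginv (ginv x) = x.
Proof. by symmetry; apply: gmul_eq1_inv; rewrite gmulVg. Qed.

Lemma ginvM x y : ginv (gmul x y) = gmul (ginv y) (ginv x).
Proof.
by symmetry; apply: gmul_eq1_inv; rewrite -gmulA (gmulA y) gmulgV gmul1g gmulgV.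
Qed.

Lemma ginv1 : ginv (gone G) = gone G.
Proof. by symmetry; apply: gmul_eq1_inv; rewrite gmul1g. Qed.

Lemma ginv_eq1 x : (ginv x = gone G) -> x = gone G.
Proof. by move=> e; rewrite -(ginvK x) e ginv1. Qed.

Definition gconj x y : G := gmul (ginv y) (gmul x y).

Lemma gconjM x y z : gconj x (gmul y z) = gconj (gconj x y) z.
Proof. by rewrite /gconj ginvM !gmulA. Qed.

Lemma gconj1 x : gconj x (gone G) = x.
Proof. by rewrite /gconj ginv1 gmul1g gmulg1. Qed.

Lemma gprod_cat (s1 s2 : seq G) : gprod (s1 ++ s2) = gmul (gprod s1) (gprod s2).
Proof. by elim: s1 => [|x s IH] /=; rewrite ?gmul1g // IH gmulA. Qed.

Lemma gprod_rcons (s : seq G) x : gprod (rcons s x) = gmul (gprod s) x.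
Proof. by rewrite -cats1 gprod_cat /= gmulg1. Qed.

Lemma gen2_flatten (A B : G -> Prop) (I : Type) (P Q : I -> G) (s : seq I) :
  (forall i, A (P i)) -> (forall i, B (Q i)) ->
  gen2 A B (gprod (flatten [seq [:: P i; Q i] | i <- s])).
Proof.
move=> PA QB; exists (flatten [seq [:: P i; Q i] | i <- s]); split=> //.
by elim: s => //= i s IH x [<- | [<- | /IH]]; [left | right |].
Qed.

Variable f : G -> G.
Hypothesis fM : forall x y, f (gmul x y) = gmul (f x) (f y).

Lemma gmorph1 : f (gone G) = gone G.
Proof. by apply: (@gmulI (f (gone G))); rewrite -fM gmul1g gmulg1. Qed.

Lemma gmorph_prod (s : seq G) : f (gprod s) = gprod (map f s).
Proof. by elim: s => [|x s IH] /=; rewrite ?gmorph1 // fM IH. Qed.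

End GroupLaws.

Lemma Forall_rcons (T : Type) (P : T -> Prop) (s : seq T) x :
  List.Forall P (rcons s x) <-> List.Forall P s /\ P x.
Proof. by rewrite -cats1 List.Forall_app List.Forall_cons_iff; intuition. Qed.

Lemma Forall_rot (T : Type) (P : T -> Prop) n (s : seq T) :
  List.Forall P (rot n s) <-> List.Forall P s.
Proof. by rewrite /rot -{3}(cat_take_drop n s) !List.Forall_app; tauto. Qed.

Section Words.
Variable G : Grp.
Variables A B : G -> Prop.
Hypothesis subA : is_subgroup A.
Hypothesis subB : is_subgroup B.
Implicit Types (x y z : G) (u : bool * G) (s c w : seq (bool * G)).

Definition factor (t : bool) x : Prop := if t then A x else B x.
Definition letter u : Prop := u.2 <> gone G /\ factor u.1 u.2.
Definition tag_alt : rel (bool * G) := fun u v => u.1 != v.1.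
Definition wprod w : G := gprod (map snd w).
Definition inv_letter u : bool * G := (u.1, ginv u.2).
Definition cyclically_reduced w : Prop :=
  List.Forall letter w /\ path.cycle tag_alt w /\ w <> [::].
Definition conj_word c w := rev (map inv_letter c) ++ w ++ c.
Definition bracketed t g := exists k ks,
  [/\ reduced_word A B (k :: ks), k.1 = t, (last k ks).1 = t & wprod (k :: ks) = g].

Lemma reduced_wordE w :
  reduced_word A B w <-> List.Forall letter w /\ sorted tag_alt w.
Proof. by rewrite List.Forall_forall. Qed.

Lemma factor_mul t x y : factor t x -> factor t y -> factor t (gmul x y).
Proof. by case: t; [apply: subA.2.1 | apply: subB.2.1]. Qed.

Lemma factor_inv t x : factor t x -> factor t (ginv x).
Proof. by case: t; [apply: subA.2.2 | apply: subB.2.2]. Qed.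

Lemma letter_inv u : letter u -> letter (inv_letter u).
Proof.
by case=> u1 uF; split; [move/ginv_eq1 | apply: factor_inv].
Qed.

Lemma path_tag_alt u u' s : u.1 = u'.1 -> path tag_alt u s = path tag_alt u' s.
Proof. by case: s => //= v s eu; rewrite /tag_alt eu. Qed.

Lemma last_tag u u' s : u.1 = u'.1 -> (last u s).1 = (last u' s).1.
Proof. by case: s. Qed.

Lemma wprod_cons u w : wprod (u :: w) = gmul u.2 (wprod w).
Proof. by []. Qed.

Lemma wprod_cat w1 w2 : wprod (w1 ++ w2) = gmul (wprod w1) (wprod w2).
Proof. by rewrite /wprod map_cat gprod_cat. Qed.

Lemma wprod_rcons w u : wprod (rcons w u) = gmul (wprod w) u.2.
Proof. by rewrite /wprod map_rcons gprod_rcons. Qed.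

Lemma wprod_rev_inv c : wprod (rev (map inv_letter c)) = ginv (wprod c).
Proof.
elim: c => [|u c IH] /=; first by rewrite ginv1.
by rewrite rev_cons wprod_rcons IH ginvM.
Qed.

Lemma wprod_conj_word c w : wprod (conj_word c w) = gconj (wprod w) (wprod c).
Proof. by rewrite /conj_word !wprod_cat wprod_rev_inv /gconj. Qed.

Lemma cyclically_reduced_reduced w : cyclically_reduced w -> reduced_word A B w.
Proof.
case=> wl [wc _]; apply/reduced_wordE; split=> //.
by case: w wc {wl} => //= u w; rewrite rcons_path => /andP[].
Qed.

Lemma cyclically_reduced_rot n w : cyclically_reduced w -> cyclically_reduced (rot n w).
Proof.
case=> wl [wc wn]; split; first exact/Forall_rot.
by rewrite rot_cycle; split=> // /(congr1 size); rewrite size_rot => /size0nil.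
Qed.

Lemma conj_word_cons u c k ks :
  conj_word (u :: c) (k :: ks) = conj_word c (inv_letter u :: rcons (k :: ks) u).
Proof. by rewrite /conj_word /= rev_cons cat_rcons /= cat_rcons. Qed.

Lemma conj_word_reduced c k ks :
  List.Forall letter c -> path tag_alt k c ->
  reduced_word A B (k :: ks) -> (last k ks).1 = k.1 ->
  reduced_word A B (conj_word c (k :: ks)) /\ ~~ path.cycle tag_alt (conj_word c (k :: ks)).
Proof.
elim: c k ks => [|u c IH] k ks.
  move=> _ _ kred kl; rewrite /conj_word /= cats0; split=> //.
  by rewrite /= rcons_path /tag_alt kl eqxx andbF.
move=> /List.Forall_cons_iff [ul cl] /= /andP[ku uc] /reduced_wordE [kl ks_alt] klast.
rewrite conj_word_cons; apply: IH => //.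
- by rewrite (path_tag_alt c (_ : _ = u.1)).
- apply/reduced_wordE; split.
    by apply/List.Forall_cons_iff; split; [exact: letter_inv | apply/Forall_rcons].
  by rewrite /= rcons_path [path _ k ks]ks_alt /tag_alt klast /= eq_sym andbb.
- by rewrite /= last_rcons.
Qed.

Lemma reduced_mul_letter u w : letter u -> reduced_word A B w ->
  exists w', reduced_word A B w' /\ wprod w' = gmul u.2 (wprod w).
Proof.
case: u => t x [/= x1 xF]; case: w => [|[t' y] w] /reduced_wordE [wl walt].
  by exists [:: (t, x)]; split=> //; apply/reduced_wordE; split; [constructor|].
move/List.Forall_cons_iff: wl => [[/= y1 yF] wl].
have wred : reduced_word A B w by apply/reduced_wordE; split; last exact: path_sorted walt.
have [tt' | tt'] := eqVneq t' t.
- rewrite {}tt' in yF walt *.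
  case: (classic (gmul x y = gone G)) => xy1.
    by exists w; split; rewrite // wprod_cons gmulA xy1 gmul1g.
  exists ((t, gmul x y) :: w); split; last by rewrite !wprod_cons gmulA.
  apply/reduced_wordE; split; first by constructor; [split; last exact: factor_mul|].
  by rewrite /= (path_tag_alt w (_ : _ = (t, y).1)).
- exists ((t, x) :: (t', y) :: w); split=> //.
  apply/reduced_wordE; split; first by do 2!constructor.
  by rewrite /= {1}/tag_alt /= eq_sym tt'.
Qed.

Lemma reduced_word_exists g : gen2 A B g -> exists w, reduced_word A B w /\ wprod w = g.
Proof.
case=> s [sAB ->] {g}; elim: s sAB => [|x s IH] sAB.
  by exists [::]; split=> //; apply/reduced_wordE.
have [w [wred ews]] : exists w, reduced_word A B w /\ wprod w = gprod s.
  by apply: IH => y ys; apply: sAB; right.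
case: (classic (x = gone G)) => [-> | x1].
  by exists w; rewrite /= gmul1g ews.
have [t xF] : exists t, factor t x.
  by case: (sAB x (or_introl erefl)); [exists true | exists false].
have [w' [w'red ew']] := @reduced_mul_letter (t, x) w (conj x1 xF) wred.
by exists w'; rewrite ew' ews.
Qed.

Hypothesis nf_uniq : forall w1 w2, reduced_word A B w1 -> reduced_word A B w2 ->
  wprod w1 = wprod w2 -> w1 = w2.

Lemma conj_head_factor u s z : cyclically_reduced (u :: s) -> factor u.1 z ->
  (exists n, wprod (rot n (u :: s)) = gconj (wprod (u :: s)) z) \/
  bracketed u.1 (gconj (wprod (u :: s)) z).
Proof.
move=> [/List.Forall_cons_iff [[u1 uF] sl] [ucyc _]] zF.
case: (classic (z = gone G)) => [-> | z1].
  by left; exists 0; rewrite rot0 gconj1.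
case: (classic (z = u.2)) => [-> | zu].
  by left; exists 1; rewrite rot1_cons wprod_rcons /gconj wprod_cons -gmulA gmulKg.
right; exists (u.1, gmul (ginv z) u.2), (rcons s (u.1, z)); split.
- apply/reduced_wordE; split.
    constructor; last by apply/Forall_rcons.
    split; last exact: factor_mul (factor_inv zF) uF.
    by move/gmul_eq1_inv; rewrite ginvK => /esym.
  move: ucyc; rewrite /= !rcons_path (path_tag_alt s (_ : _ = u.1)) //.
  by rewrite /tag_alt (last_tag s (u' := u)).
- by [].
- by rewrite last_rcons.
- by rewrite wprod_cons wprod_rcons /gconj !gmulA.
Qed.

Lemma conj_letter w (z : bool * G) : cyclically_reduced w -> letter z ->
  (exists n, wprod (rot n w) = gconj (wprod w) z.2) \/
  bracketed z.1 (gconj (wprod w) z.2).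
Proof.
move=> wred [_ zF]; have [wl [wcyc wn]] := wred.
case: w wl wcyc wn wred => [|u s] // wl wcyc _ wred.
have [zu | zu] := eqVneq z.1 u.1.
  by rewrite zu; apply: conj_head_factor; rewrite // -zu.
case/lastP: s wl wcyc wred => [|s v] wl wcyc wred.
  by move: wcyc; rewrite /= /tag_alt eqxx.
(* Conjugating by [v^-1] first moves the last letter [v] to the front. *)
have vz : v.1 = z.1.
  move: wcyc zu; rewrite /= rcons_path last_rcons /tag_alt => /andP[_].
  by case: (v.1); case: (u.1); case: (z.1).
set r := (size (u :: rcons s v)).-1.
have rred := cyclically_reduced_rot r wred.
have er : rot r (u :: rcons s v) = v :: u :: s.
  by rewrite -(rotr1_rcons v (u :: s)) /rotr subn1.
rewrite er in rred.
have ew : gconj (wprod (u :: rcons s v)) z.2 =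
          gconj (wprod (v :: u :: s)) (gmul v.2 z.2).
  by rewrite gconjM; congr gconj; rewrite /gconj wprod_cons -gmulA gmulKg wprod_rcons gmulA.
have [_ [_ vF]] : List.Forall letter s /\ letter v.
  by apply/Forall_rcons; exact: List.Forall_inv_tail wl.
have vzF : factor v.1 (gmul v.2 z.2) by apply: factor_mul; rewrite // vz.
rewrite ew.
case: (conj_head_factor rred vzF) => [[n en] | [k [ks [kred k1 kl ek]]]].
  by left; exists (rot_add (u :: rcons s v) r n); rewrite -rot_rot_add er.
by right; exists k, ks; rewrite -vz.
Qed.

Lemma conj_reduced_rot c s w : reduced_word A B c ->
  cyclically_reduced s -> cyclically_reduced w ->
  wprod w = gconj (wprod s) (wprod c) -> exists n, w = rot n s.
Proof.
move=> + + wcr; have wred := cyclically_reduced_reduced wcr.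
elim: c s => [|d c IH] s /reduced_wordE [cl calt] scr ew.
  exists 0; rewrite rot0; apply: nf_uniq => //; first exact: cyclically_reduced_reduced.
  by rewrite ew gconj1.
move/List.Forall_cons_iff: cl calt => [dl cl] /= dc.
have cred : reduced_word A B c by apply/reduced_wordE; split; last exact: path_sorted dc.
rewrite wprod_cons gconjM in ew.
case: (conj_letter scr dl) => [[n en] | [k [ks [kred kd kl ek]]]].
  have [n' ->] : exists n', w = rot n' (rot n s).
    by apply: IH => //; [exact: cyclically_reduced_rot | rewrite en].
  by exists (rot_add s n n'); rewrite rot_rot_add.
have kc : path tag_alt k c by rewrite (path_tag_alt c (_ : _ = d.1)).
have [cwred cwncyc] := conj_word_reduced cl kc kred (etrans kl (esym kd)).
have ecw : conj_word c (k :: ks) = w.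
  by apply: nf_uniq; rewrite // wprod_conj_word ek ew.
by case: wcr => _ [wcyc _]; move: cwncyc; rewrite ecw wcyc.
Qed.

Theorem conj_cyclically_reduced_rot g s w : gen2 A B g ->
  cyclically_reduced s -> cyclically_reduced w ->
  wprod w = gconj (wprod s) g -> exists n, w = rot n s.
Proof.
move=> /reduced_word_exists [c [cred <-]]; exact: conj_reduced_rot.
Qed.
End Words.

Arguments tag_alt {G}.

Lemma nth_rot (T : Type) (x0 : T) (s : seq T) n j : n <= size s -> j < size s ->
  nth x0 (rot n s) j = nth x0 s ((n + j) %% size s).
Proof.
move=> ns js; rewrite /rot nth_cat size_drop; case: ltnP => jn.
  by rewrite nth_drop modn_small //; lia.
rewrite nth_take; last lia.
have -> : n + j = (j - (size s - n)) + size s by lia.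
by rewrite modnDr modn_small //; lia.
Qed.

Section Interleave.
Variables I T : Type.
Implicit Types P Q : I -> T.
Implicit Type s : seq I.

Definition interleave (P Q : I -> T) s : seq (bool * T) :=
  flatten [seq [:: (true, P i); (false, Q i)] | i <- s].

Lemma size_interleave P Q s : size (interleave P Q s) = (size s).*2.
Proof. by elim: s => //= i s ->. Qed.

Lemma interleave_tag P Q x0 s n : n < size (interleave P Q s) ->
  (nth x0 (interleave P Q s) n).1 = ~~ odd n.
Proof.
elim: s n => [|i s IH] [|[|n]] //=; rewrite negbK.
by rewrite !ltnS; exact: IH.
Qed.

Lemma rot_interleave P Q q s : rot q.*2 (interleave P Q s) = interleave P Q (rot q s).
Proof.
have interleave_cat s1 s2 : interleave P Q (s1 ++ s2) = interleave P Q s1 ++ interleave P Q s2.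
  by rewrite /interleave map_cat flatten_cat.
rewrite /rot interleave_cat; congr (_ ++ _).
  by elim: s q => [|i s IH] [|q] //=; rewrite IH.
by elim: s q => [|i s IH] [|q] //=; rewrite IH.
Qed.

Lemma rot_interleave_eq P Q (P' Q' : I -> T) s n :
  rot n (interleave P Q s) = interleave P' Q' s ->
  exists2 q, q <= size s & interleave P' Q' s = interleave P Q (rot q s).
Proof.
rewrite rot_minn size_interleave; set k := minn n _ => e.
have [kle | klt] := leqP (size s).*2 k.
  exists 0 => //; rewrite rot0 -e.
  by rewrite (_ : k = (size s).*2) ?(rot_oversize, size_interleave) //; lia.
clearbody k; have k_even : ~~ odd k.
  case: s e klt => [|i0 s'] // e klt; pose x0 := (true, P i0).
  have t0 : (nth x0 (interleave P' Q' (i0 :: s')) 0).1 = true.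
    by rewrite interleave_tag // size_interleave double_gt0.
  rewrite -e nth_rot ?size_interleave ?addn0 ?modn_small ?(ltnW klt) // in t0.
  by rewrite interleave_tag ?size_interleave in t0.
have ek : k = k./2.*2 by rewrite -{1}(odd_double_half k) (negbTE k_even) add0n.
exists k./2; first by rewrite -leq_double -ek ltnW.
by rewrite -e {1}ek rot_interleave.
Qed.

End Interleave.


Lemma interleave_map (I J T : Type) (P Q : J -> T) (f : I -> J) (s : seq I) :
  interleave P Q (map f s) = interleave (P \o f) (Q \o f) s.
Proof. by rewrite /interleave -map_comp. Qed.

Lemma interleave_eq (I : eqType) (T : Type) (P Q P' Q' : I -> T) (s : seq I) :
  interleave P Q s = interleave P' Q' s ->
  forall i, i \in s -> P i = P' i /\ Q i = Q' i.
Proof.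
elim: s => [|j s IH] //= [eP eQ /IH {}IH] i.
by rewrite inE => /predU1P [-> | /IH].
Qed.

Lemma wprod_interleave (G : Grp) (I : Type) (P Q : I -> G) (s : seq I) :
  wprod (interleave P Q s) = gprod (flatten [seq [:: P i; Q i] | i <- s]).
Proof. by rewrite /wprod /interleave map_flatten -map_comp. Qed.

Lemma cyclically_reduced_interleave (G : Grp) (A B : G -> Prop) (I : Type)
    (P Q : I -> G) (s : seq I) :
  s <> [::] -> (forall i, letter A B (true, P i)) -> (forall i, letter A B (false, Q i)) ->
  cyclically_reduced A B (interleave P Q s).
Proof.
move=> sn Pl Ql; split; last split.
- elim: s {sn} => [|i s IH] /=; first by constructor.
  by do 2![constructor => //].
- case: s sn => // i s _.
  have alt (z : G) : path tag_alt (false, z) (interleave P Q s) /\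
                     (last (false, z) (interleave P Q s)).1 = false.
    by elim: s z => //= j s IH z; have [-> ->] := IH (Q j).
  have [altQ lastQ] := alt (Q i).
  by rewrite /= rcons_path -/(interleave P Q s) altQ /tag_alt lastQ.
- by case: s sn.
Qed.

Lemma mcycleX m q (i : 'I_m) : val ((mcycle m ^+ q)%g i) = (i + q) %% m.
Proof.
rewrite permX; elim: q => [|q IH] /=; first by rewrite addn0 modn_small.
by rewrite /mcycle permE /= IH -addn1 modnDml -addnA addn1.
Qed.

Lemma rot_enum_mcycle m q : q <= m ->
  rot q (enum 'I_m) = map (mcycle m ^+ q)%g (enum 'I_m).
Proof.
move=> qm; apply: (inj_map val_inj); rewrite map_rot val_enum_ord.
apply: (@eq_from_nth _ 0).
  by rewrite size_rot !size_map size_iota -enumT size_enum_ord.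
rewrite size_rot size_iota => j jm.
rewrite nth_rot ?size_iota // nth_iota ?ltn_pmod ?(leq_ltn_trans _ jm) //.
rewrite -map_comp (nth_map (Ordinal jm)) ?size_enum_ord //=.
by rewrite mcycleX nth_enum_ord // add0n addnC.
Qed.

Lemma iter_perm (T : Type) (I : finType) (f : T -> T) (x : I -> T) (sigma : {perm I}) :
  (forall i, f (x i) = x (sigma i)) -> forall k i, iter k f (x i) = x ((sigma ^+ k)%g i).
Proof.
move=> fx; elim=> [|k IH] i /=; first by rewrite expg0 perm1.
by rewrite IH fx expgSr permM.
Qed.

Lemma iter_fix_gcdn (T : Type) (f : T -> T) x n k : 0 < n ->
  iter n f x = x -> iter k f x = x -> iter (gcdn n k) f x = x.
Proof.
move=> n_gt0 fn fk; have [b _ /dvdnP [c ec]] := Bezoutl k n_gt0.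
have fixM (l j : nat) : iter l f x = x -> iter (j * l) f x = x.
  by move=> fl; elim: j => // j IH; rewrite mulSn iterD IH.
by rewrite -[in RHS](fixM _ c fn) -ec iterD fixM.
Qed.

Lemma prime_dvd_order_perm (T : Type) (I : finType) (f : T -> T) (x : I -> T)
    (sigma : {perm I}) p :
  prime p -> (forall i, f (x i) = x (sigma i)) -> (forall i, iter p f (x i) = x i) ->
  ~ (forall i, f (x i) = x i) -> p %| #[sigma]%g.
Proof.
move=> p_prime fx fp not_fixed; apply: contraT; rewrite -prime_coprime // => /eqP cop.
case: not_fixed => i; have := iter_fix_gcdn (k := #[sigma]%g) (prime_gt0 p_prime) (fp i).
by rewrite cop; apply; rewrite (iter_perm fx) expg_order perm1.
Qed.

Lemma conj_interleave_perm (G : Grp) (F Y : G -> Prop) (h : G -> G) (g : G) m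
    (as_ xs : 'I_m -> G) (a := gprod (flatten [seq [:: as_ i; xs i] | i <- enum 'I_m])) :
  free_product F Y -> gen2 F Y g ->
  (forall x y, h (gmul x y) = gmul (h x) (h y)) -> injective h ->
  (forall f, F f -> h f = f) -> (forall y, Y y -> Y (h y)) -> 0 < m ->
  (forall i, letter F Y (true, as_ i)) -> (forall i, letter F Y (false, xs i)) ->
  h a = gconj a g ->
  exists2 sigma : 'S_m, sigma \in <[mcycle m]>%g &
    forall i, as_ i = as_ (sigma i) /\ h (xs i) = xs (sigma i).
Proof.
move=> [subF [subY nf]] Yg hM h_inj hF hY m_gt0 as_l xs_l ha.
have enum_nil : enum 'I_m <> [::] by move/(congr1 size); rewrite size_enum_ord /=; lia.
have hxs_l i : letter F Y (false, h (xs i)).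
  have [/= x1 xY] := xs_l i; split; last exact: hY.
  by rewrite /= -(gmorph1 hM) => /h_inj.
have [n en] : exists n, interleave as_ (h \o xs) (enum 'I_m) =
                        rot n (interleave as_ xs (enum 'I_m)).
  apply: (conj_cyclically_reduced_rot subF subY nf Yg);
    try exact: cyclically_reduced_interleave.
  rewrite !wprod_interleave -/a -ha (gmorph_prod hM) map_flatten -map_comp.
  congr (gprod (flatten _)); apply: eq_map => i /=.
  by rewrite (hF (as_ i)) //; case: (as_l i).
have [q qm] := rot_interleave_eq (esym en); rewrite size_enum_ord in qm.
rewrite rot_enum_mcycle // (interleave_map as_ xs) => /interleave_eq sigma_in.
by exists (mcycle m ^+ q)%g => [|i]; [exact: mem_cycle | apply: sigma_in; rewrite mem_enum].
Qed.

Theorem lemma4p1 (G : Grp) (F0 X0 X1 : G -> Prop) (h : G -> G) (p : nat)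
  (a : G) (m : nat) (as_ xs : 'I_m -> G) :
  free_product X0 X1 ->
  free_product F0 (gen2 X0 X1) ->
  (forall g : G, gen2 F0 (gen2 X0 X1) g) ->
  is_automorphism h ->
  (forall f, F0 f -> h f = f) ->
  (forall y, gen2 X0 X1 y -> gen2 X0 X1 (h y)) ->
  (forall y, gen2 X0 X1 y -> exists y', gen2 X0 X1 y' /\ h y' = y) ->
  prime p ->
  order_on (gen2 X0 X1) h p ->
  (forall y, gen2 X0 X1 y -> (h y = y <-> X0 y)) ->
  ~ gen2 F0 X0 a -> ~ gen2 X0 X1 a ->
  (forall i, F0 (as_ i) /\ as_ i <> gone G) ->
  (forall i, gen2 X0 X1 (xs i) /\ xs i <> gone G) ->
  a = gprod (flatten [seq [:: as_ i; xs i] | i <- enum 'I_m]) ->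
  are_conjugate a (h a) ->
  exists sigma : 'S_m,
    sigma \in <[mcycle m]>%g /\
    (forall i, as_ i = as_ (sigma i) /\ h (xs i) = xs (sigma i)) /\
    (p %| #[sigma]%g)%N.
Proof.
move=> _ FY Ggen [hM /bij_inj h_inj] hF hY _ p_prime [_ [hp _]] hX0
  a_notin _ as_ok xs_ok ea [g ega].
have m_gt0 : 0 < m.
  case: (posnP m) => // m0; case: a_notin; exists [::]; split=> //.
  by rewrite ea (size0nil (_ : size (enum 'I_m) = 0)) // size_enum_ord.
have [sigma sigma_cyc sigma_ok] : exists2 sigma : 'S_m, sigma \in <[mcycle m]>%g &
    forall i, as_ i = as_ (sigma i) /\ h (xs i) = xs (sigma i).
  apply: (conj_interleave_perm FY (Ggen g) hM h_inj hF hY m_gt0) => [i | i |].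
  - by case: (as_ok i).
  - by case: (xs_ok i).
  - by rewrite -ea.
exists sigma; do 2!split=> //.
apply: (prime_dvd_order_perm p_prime (fun i => (sigma_ok i).2)) => [i | xs_fixed].
  exact: hp (xs_ok i).1.
case: a_notin; rewrite ea; apply: gen2_flatten => i; first by case: (as_ok i).
by apply/hX0; [case: (xs_ok i) | exact: xs_fixed].
Qed.
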